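(* Let $n\ge2$, $\rho\in\mathbb{C}\setminus\{-1,1\}$, let $z_k$ be a zero of $p_{2n}(\rho,z)$, and let $\lambda_k=\frac{z_k(1-\rho^2)}{(z_k-\rho)(1-\rho z_k)}$ be the corresponding eigenvalue of $K_n(\rho)$. Then $|z_k|=1$ iff $\lambda_k\in\mathrm{range}\{\sigma(\rho,\theta)\}$.
   Context: $K_n(\rho)=\left[\rho^{|j-k|}\right]_{j,k=1}^n$ (with $\rho^0=1$). $p_{2n}(\rho,z)=z^{2n}+(1+\rho^2)\sum_{k=1}^{n-1}z^{2k}-2\rho\sum_{k=0}^{n-1}z^{2k+1}+1$. For $\rho\neq\pm1$ no zero of $p_{2n}(\rho,\cdot)$ equals $\rho$ or $1/\rho$, so $\lambda_k$ is well defined, and it is an eigenvalue of $K_n(\rho)$. $\sigma(\rho,\theta)=\frac{1-\rho^2}{1-2\rho\cos\theta+\rho^2}$, and $\mathrm{range}\{\sigma(\rho,\theta)\}$ denotes the set of values $\sigma(\rho,\theta)$ for real $\theta\in(-\pi,\pi]$ (at which the denominator is nonzero). For $|\rho|<1$ this is the range of the symbol of the Laurent matrix associated with $K_n(\rho)$; for $|\rho|\ge1$ it is the range of the analytic continuation of that formula. *)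

From HB Require Import structures.
From mathcomp Require Import all_boot all_order all_algebra.
From mathcomp Require Import complex.
From mathcomp Require Import reals trigo.
Set Implicit Arguments. Unset Strict Implicit. Unset Printing Implicit Defensive.
Import Order.TTheory GRing.Theory Num.Theory ComplexField.
Local Open Scope ring_scope.
Local Open Scope complex_scope.

(* K_n(rho) = [rho^{|j-k|}]_{j,k=1..n} (0-indexed here); context only. *)
Definition Kmat (R : rcfType) (n : nat) (rho : R[i]) : 'M[R[i]]_n :=
  \matrix_(j < n, k < n) rho ^+ (if (j <= k)%N then (k - j)%N else (j - k)%N).

Definition p2n (R : rcfType) (n : nat) (rho z : R[i]) : R[i] :=
  z ^+ (2 * n) + (1 + rho ^+ 2) * (\sum_(1 <= k < n) z ^+ (2 * k))
  - 2 * rho * (\sum_(0 <= k < n) z ^+ (2 * k + 1)) + 1.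

Definition lambda_of (R : rcfType) (rho z : R[i]) : R[i] :=
  z * (1 - rho ^+ 2) / ((z - rho) * (1 - rho * z)).

Definition sigma_den (R : realType) (rho : R[i]) (theta : R) : R[i] :=
  1 - 2 * rho * (cos theta)%:C + rho ^+ 2.

Definition sigma (R : realType) (rho : R[i]) (theta : R) : R[i] :=
  (1 - rho ^+ 2) / sigma_den rho theta.

Definition in_sigma_range (R : realType) (rho w : R[i]) : Prop :=
  exists theta : R, [/\ - pi < theta, theta <= pi,
                        sigma_den rho theta != 0 & w = sigma rho theta].

From HB Require Import structures.
From mathcomp Require Import all_boot all_order all_algebra.
From mathcomp Require Import complex.
From mathcomp Require Import reals trigo.
From mathcomp Require Import ring lra.
Import Order.TTheory GRing.Theory Num.Theory ComplexField.
Set Implicit Arguments. Unset Strict Implicit. Unset Printing Implicit Defensive.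
Local Open Scope ring_scope.
Local Open Scope complex_scope.

(* Multiplying by 1 - z^2 telescopes p_{2n} into
   (1 - rho z)^2 - z^{2n} (z - rho)^2, so at a zero z the quantity
   (z - rho)(1 - rho z) is nonzero and lambda(z) is well defined.  A direct
   computation gives
     z (1 - 2 rho cos t + rho^2) - (z - rho)(1 - rho z) = rho (z^2 - 2 z cos t + 1),
   so for rho <> 0, lambda(z) = sigma(rho, t) exactly when z is a root of
   z^2 - 2 z cos t + 1.  The roots of z^2 - 2 c z + 1 with -1 <= c <= 1 are
   precisely the points of the unit circle (c = Re z).  For rho = 0 both sides
   hold: lambda = sigma = 1, and p_{2n} = 0 forces z^{2n+2} = 1. *)

Lemma sum_even_powers (F : comNzRingType) (z : F) (n : nat) :
  (1 - z ^+ 2) * \sum_(0 <= k < n) z ^+ (2 * k) = 1 - z ^+ (2 * n).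
Proof.
rewrite big_mkord exprM -[RHS]opprB (subrX1 (z ^+ 2)) -[RHS]mulNr opprB.
by congr (_ * _); apply: eq_bigr => k _; rewrite exprM.
Qed.

Lemma p2n_factor (R : rcfType) (n : nat) (rho z : R[i]) : (1 <= n)%N ->
  (1 - z ^+ 2) * p2n n rho z =
  (1 - rho * z) ^+ 2 - z ^+ (2 * n) * (z - rho) ^+ 2.
Proof.
move=> n_gt0; rewrite /p2n.
set S := \sum_(0 <= k < n) z ^+ (2 * k).
have -> : \sum_(1 <= k < n) z ^+ (2 * k) = S - 1.
  by rewrite /S [in RHS]big_ltn // muln0 expr0 addrC addKr.
have -> : \sum_(0 <= k < n) z ^+ (2 * k + 1) = z * S.
  by rewrite /S big_distrr; apply: eq_bigr => k _; rewrite exprD expr1 mulrC.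
have geom := sum_even_powers z n; rewrite -/S in geom.
have -> : (1 - z ^+ 2) * (z ^+ (2 * n) + (1 + rho ^+ 2) * (S - 1)
                         - 2 * rho * (z * S) + 1) =
          (1 - z ^+ 2) * (z ^+ (2 * n) + 1)
          + (1 + rho ^+ 2) * ((1 - z ^+ 2) * S - (1 - z ^+ 2))
          - 2 * rho * z * ((1 - z ^+ 2) * S) by ring.
rewrite geom; ring.
Qed.

Lemma p2n_root_denom_neq0 (R : rcfType) (n : nat) (rho z : R[i]) :
  (1 <= n)%N -> 1 - rho ^+ 2 != 0 -> p2n n rho z = 0 ->
  (z - rho) * (1 - rho * z) != 0.
Proof.
move=> n_gt0 rho2_neq1 root_z.
have := p2n_factor rho z n_gt0; rewrite root_z mulr0 => /esym/eqP.
rewrite subr_eq0 => /eqP sq_eq.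
have z_neq0 : z != 0.
  apply: contra_eq_neq sq_eq => ->.
  by rewrite mulr0 subr0 expr1n expr0n muln_eq0 /= eqn0Ngt n_gt0 mul0r oner_neq0.
have z_neq_rho : z - rho != 0.
  apply: contra_eq_neq sq_eq => /subr0_eq z_rho.
  by rewrite z_rho subrr expr0n mulr0 -expr2 sqrf_eq0.
rewrite mulf_neq0 //; apply: contra_eq_neq sq_eq => ->.
by rewrite expr0n eq_sym mulf_eq0 negb_or expf_neq0 ?sqrf_eq0.
Qed.

Lemma p2n_rho0_root_norm1 (R : rcfType) (n : nat) (z : R[i]) :
  (1 <= n)%N -> p2n n 0 z = 0 -> `|z| = 1.
Proof.
move=> n_gt0 root_z.
have := p2n_factor 0 z n_gt0; rewrite root_z mulr0 !mul0r !subr0 expr1n.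
move=> /esym/eqP; rewrite subr_eq0 eq_sym -exprD => /eqP zX1.
have : `|z| ^+ (2 * n + 2) = 1 by rewrite -normrX zX1 normr1.
by move/eqP; rewrite pexpr_eq1 ?addn2 // => /eqP.
Qed.

Lemma norm_eq1_quadratic_root (R : rcfType) (z : R[i]) :
  `|z| = 1 <-> exists2 c : R, -1 <= c <= 1 & z ^+ 2 - 2 * c%:C * z + 1 = 0.
Proof.
split=> [z1 | [c /andP[c_ge c_le]]].
  exists (complex.Re z).
    by rewrite -ler_norml -lecR (le_trans (normc_ge_Re z)) ?z1.
  have zJ : z * z^* = 1 by rewrite -sqr_normc z1 expr1n.
  by rewrite -[2 * _](addcJ z) -zJ; ring.
case: z => a b /eqP; rewrite eq_complex /= => /andP[/eqP re_eq /eqP im_eq].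
suff ab1 : a * a + b * b = 1.
  apply/eqP; rewrite -(sqrp_eq1 (normr_ge0 _)) sqr_normc /= eq_complex /=.
  by apply/andP; split; apply/eqP; lra.
have /eqP : b * (a - c) = 0 by lra.
rewrite mulf_eq0 subr_eq0 => /orP[/eqP b0 | /eqP a_c]; last by subst a; lra.
subst b; have c2_le1 : 0 <= 1 - c ^+ 2 by nra.
have /eqP : (a - c) ^+ 2 + (1 - c ^+ 2) = 0 by lra.
rewrite paddr_eq0 ?sqr_ge0 // sqrf_eq0 subr_eq0 => /andP[/eqP a_c /eqP c2]; subst a.
lra.
Qed.

Lemma exists_angle_cos (R : realType) (P : R -> Prop) :
  (exists t : R, [/\ - pi < t, t <= pi & P (cos t)]) <->
  (exists2 c : R, -1 <= c <= 1 & P c).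
Proof.
split=> [[t [_ _ Pt]] | [c c_bd Pc]].
  by exists (cos t) => //; rewrite -ler_norml cos_max.
have c_in : c \in `[-1, 1] by rewrite in_itv.
exists (acos c); split; last by rewrite acosK.
- by apply: lt_le_trans (acos_ge0 c_in); rewrite oppr_lt0 pi_gt0.
- exact: acos_lepi.
Qed.

Lemma sigma_den_mul_sub (R : realType) (rho z : R[i]) (t : R) :
  z * sigma_den rho t - (z - rho) * (1 - rho * z) =
  rho * (z ^+ 2 - 2 * (cos t)%:C * z + 1).
Proof. by rewrite /sigma_den; ring. Qed.

Lemma lambda_eq_sigmaP (R : realType) (rho z : R[i]) (t : R) :
  1 - rho ^+ 2 != 0 -> (z - rho) * (1 - rho * z) != 0 ->
  (sigma_den rho t != 0 /\ lambda_of rho z = sigma rho t) <->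
  rho * (z ^+ 2 - 2 * (cos t)%:C * z + 1) = 0.
Proof.
move=> rho2_neq1 den_neq0; rewrite -sigma_den_mul_sub; split.
  move=> [sden_neq0 /eqP]; rewrite /lambda_of /sigma eqr_div //.
  rewrite mulrAC (mulrC (1 - rho ^+ 2)) => /eqP /(mulIf rho2_neq1) ->.
  exact: subrr.
move=> /eqP; rewrite subr_eq0 => /eqP zden.
have /andP[z_neq0 sden_neq0] : (z != 0) && (sigma_den rho t != 0).
  by rewrite -negb_or -mulf_eq0 zden.
split=> //; rewrite /lambda_of /sigma -zden.
by field; rewrite z_neq0 sden_neq0.
Qed.

Theorem proposition3p4 (R : realType) (n : nat) (rho z : R[i]) :
  (2 <= n)%N -> rho != 1 -> rho != -1 -> p2n n rho z = 0 ->
  (`|z| = 1 <-> in_sigma_range rho (lambda_of rho z)).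
Proof.
move=> n_ge2 rho_neq1 rho_neqN1 root_z; have n_gt0 := ltnW n_ge2.
have rho2_neq1 : 1 - rho ^+ 2 != 0.
  rewrite -[1](expr1n _ 2) subr_sqr mulf_neq0 //.
    by rewrite subr_eq0 eq_sym.
  by rewrite addrC addr_eq0.
have den_neq0 := p2n_root_denom_neq0 n_gt0 rho2_neq1 root_z.
have -> : in_sigma_range rho (lambda_of rho z) <->
    exists2 c : R, -1 <= c <= 1 & rho * (z ^+ 2 - 2 * c%:C * z + 1) = 0.
  apply: iff_trans (exists_angle_cos _); split=> -[t [t_gt t_le]].
    by move=> sden_neq0 lambda_eq; exists t; split=> //; apply/lambda_eq_sigmaP.
  by move=> /(lambda_eq_sigmaP _ rho2_neq1 den_neq0) [? ?]; exists t.
have [rho0 | rho_neq0] := eqVneq rho 0.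
  split=> _; first by exists 0; rewrite ?rho0 ?mul0r // lerN10 ler01.
  by rewrite rho0 in root_z; apply: p2n_rho0_root_norm1 root_z.
rewrite norm_eq1_quadratic_root.
split=> -[c c_bd root_c]; exists c => //.
  by rewrite root_c mulr0.
by move/eqP: root_c; rewrite mulf_eq0 (negbTE rho_neq0) => /eqP.
Qed.
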